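(* Let $a,b,c,d$ be integers with $a\le c$ and $b\ge d$. Then $$\mathrm{gf}(a,b,c,d)=\prod_{j=1}^{c-a}\frac{\left(Xq^{j-1-2b+a}+Yq^{-j+1+2d-a}\right)\left(1-q^{2(b-d)+2j}\right)}{2\left(1-q^{2j}\right)}.$$ In particular, specializing $X=Y=1$, $$\mathrm{gf}(a,b,c,d)\big|_{X=Y=1}=2^{a-c}q^{\frac12(a-c)(a+c-1-4d)}\frac{(-q^{2a-2b-2d};q^2)_{c-a}\,(q^{2b-2d+2};q^2)_{c-a}}{(q^2;q^2)_{c-a}}.$$
   Context: $X,Y,q$ are indeterminates and $(u;p)_n=\prod_{j=0}^{n-1}(1-up^j)$. Consider lattice paths in $\mathbb Z\times\mathbb Z$ using unit steps to the right, $(s,t)\to(s+1,t)$, and downward, $(s,t)\to(s,t-1)$. A right step from $(s,t)$ to $(s+1,t)$ has weight $\frac{Xq^{s-2t}+Yq^{2t-s}}{2}$, a down step has weight $1$, and the weight of a path is the product of the weights of its steps. $\mathrm{gf}(a,b,c,d)$ denotes the sum of weights of all such paths from $(a,b)$ to $(c,d)$. *)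

From HB Require Import structures.
From mathcomp Require Import all_boot all_order all_algebra.
Set Implicit Arguments. Unset Strict Implicit. Unset Printing Implicit Defensive.
Import Order.TTheory GRing.Theory Num.Theory.
Local Open Scope ring_scope.

Definition rstep_w (F : fieldType) (X Y q : F) (s t : int) : F :=
  (X * q ^ (s - 2 * t) + Y * q ^ (2 * t - s)) / 2.

(* weight of the path starting at (s,t) encoded by a sequence of steps:
   true = right step (s,t) -> (s+1,t), false = down step (s,t) -> (s,t-1) *)
Fixpoint path_w (F : fieldType) (X Y q : F) (s t : int) (p : seq bool) : F :=
  match p with
  | [::] => 1
  | true :: p' => rstep_w X Y q s t * path_w X Y q (s + 1) t p'
  | false :: p' => path_w X Y q s (t - 1) p'
  end.

(* gf(a,b,c,d): sum of weights of all right/down lattice paths from (a,b) to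
   (c,d).  Such a path has exactly (c-a) right steps and (b-d) down steps; if
   c < a or b < d there is no path and the sum is 0. *)
Definition gf (F : fieldType) (X Y q : F) (a b c d : int) : F :=
  if (a <= c) && (d <= b) then
    let m := `|c - a|%N in
    let n := (`|c - a| + `|b - d|)%N in
    \sum_(p : n.-tuple bool | count id p == m) path_w X Y q a b p
  else 0.

Definition qpoch (F : fieldType) (u p : F) (n : nat) : F :=
  \prod_(j < n) (1 - u * p ^+ j).

From mathcomp Require Import all_boot all_order all_algebra.
From mathcomp Require Import zify ring.
Import GRing.Theory Num.Theory.
Set Implicit Arguments. Unset Strict Implicit. Unset Printing Implicit Defensive.
Local Open Scope ring_scope.

(* Let H(s,t;m,k) be the sum of the weights of the paths from (s,t) made of
   m right steps and k down steps, so that gf(a,b,c,d) = H(a,b;c-a,b-d).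
   Splitting off the first step gives the recursion
     H(s,t;m+1,k+1) = w(s,t) H(s+1,t;m,k+1) + H(s,t-1;m+1,k),
   and, writing r = q^2 and N_i = X q^(s-2t+i) + Y q^(2t-2k-s-i), one checks
   by induction on m and then k that
     2^m (r;r)_m H(s,t;m,k) = (prod_(i<m) N_i) (r^(k+1);r)_m.
   This form has no denominators; the induction step reduces to a single
   scalar identity, a q-analogue of Pascal's rule (q_pascal).  Dividing by
   2^m (r;r)_m gives the product formula, and for X = Y = 1 each N_i is a power
   of q times a factor of (-q^(2a-2b-2d);q^2)_m, which gives the second,
   q-Pochhammer form once the powers of q are summed. *)

Section PathSums.
Variables (F : fieldType) (X Y q : F).

Definition paths_gf (n : nat) (s t : int) (m : nat) : F :=
  \sum_(p : n.-tuple bool | count id p == m) path_w X Y q s t p.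

Lemma paths_gf_cons n s t m :
  paths_gf n.+1 s t m =
  (if m is m'.+1 then rstep_w X Y q s t * paths_gf n (s + 1) t m' else 0)
  + paths_gf n s (t - 1) m.
Proof.
rewrite /paths_gf
  (reindex (fun xp : bool * n.-tuple bool => [tuple of xp.1 :: xp.2])) /=; last first.
  exists (fun p : n.+1.-tuple bool => (thead p, [tuple of behead p])).
    by move=> [x p] _ /=; congr pair; apply: val_inj.
  by move=> p _; apply: val_inj => /=; case/tupleP: p.
rewrite -(pair_big_dep xpredT (fun x (p : n.-tuple bool) => count id (x :: p) == m)
            (fun x p => path_w X Y q s t (x :: p))) big_bool /=.
congr (_ + _); case: m => [|m]; last by rewrite mulr_sumr.
by rewrite big_pred0 // => p; rewrite add1n.
Qed.

Lemma paths_gf_overfull n s t m : (n < m)%N -> paths_gf n s t m = 0.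
Proof.
move=> ltnm; rewrite /paths_gf big_pred0 // => p.
apply/negbTE; rewrite neq_ltn (leq_ltn_trans _ ltnm) //.
by rewrite -{2}(size_tuple p) count_size.
Qed.

Lemma paths_gf_down k s t : paths_gf k s t 0 = 1.
Proof.
elim: k t => [|k IHk] t; last by rewrite paths_gf_cons add0r IHk.
rewrite /paths_gf (eq_bigl (fun p => p == [tuple])) ?big_pred1_eq // => p.
by rewrite tuple0 eqxx.
Qed.

End PathSums.

Lemma qpochSr (F : fieldType) (u p : F) n :
  qpoch u p n.+1 = qpoch u p n * (1 - u * p ^+ n).
Proof. by rewrite /qpoch big_ord_recr. Qed.

Lemma qpochSl (F : fieldType) (u p : F) n :
  qpoch u p n.+1 = (1 - u) * qpoch (u * p) p n.
Proof.
rewrite /qpoch big_ord_recl expr0 mulr1; congr (_ * _).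
by apply: eq_bigr => i _; rewrite exprS mulrA.
Qed.

(* The one scalar identity behind the induction: with u = q^(m+1) and
   v = q^(k+1) it is the q-Pascal rule for the closed form below. *)
Lemma q_pascal (F : fieldType) (x y u v : F) : u != 0 ->
  (x + y * v ^+ 2) * (1 - u ^+ 2) + u * (x * u + y / u) * (1 - v ^+ 2)
  = (x + y) * (1 - (u * v) ^+ 2).
Proof. by move=> u0; field. Qed.

Section ClosedForm.
Variables (F : fieldType) (X Y q : F).
Hypotheses (two_neq0 : (2 : F) != 0) (q_neq0 : q != 0).

Definition numer_factor (s t : int) (k i : nat) : F :=
  X * q ^ (s - 2 * t + i%:Z) + Y * q ^ (2 * t - 2 * k%:Z - s - i%:Z).

Definition numer (s t : int) (k m : nat) : F :=
  \prod_(i < m) numer_factor s t k i.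

Lemma numer_factor_rstep s t : numer_factor s t 0 0 = 2 * rstep_w X Y q s t.
Proof.
rewrite /numer_factor /rstep_w [RHS]mulrC divfK //.
by congr (_ * q ^ _ + _ * q ^ _); lia.
Qed.

Lemma numer_factor_right s t k i :
  numer_factor (s + 1) t k i = numer_factor s t k i.+1.
Proof. by rewrite /numer_factor; congr (_ * q ^ _ + _ * q ^ _); lia. Qed.

Lemma numer_factor_down s t k i :
  numer_factor s (t - 1) k i = q * numer_factor s t k.+1 i.+1.
Proof.
rewrite /numer_factor.
have -> : s - 2 * (t - 1) + i%:Z = (s - 2 * t + i.+1%:Z) + 1 by lia.
have -> : 2 * (t - 1) - 2 * k%:Z - s - i%:Z
          = (2 * t - 2 * k.+1%:Z - s - i.+1%:Z) + 1 by lia.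
by rewrite !expfzDr // expr1z; ring.
Qed.

Lemma numer_right s t k m :
  numer s t k m.+1 = numer_factor s t k 0 * numer (s + 1) t k m.
Proof.
rewrite /numer big_ord_recl; congr (_ * _).
by apply: eq_bigr => i _; rewrite numer_factor_right.
Qed.

Lemma numer_down s t k m :
  numer s (t - 1) k m.+1
  = q ^+ m.+1 * numer (s + 1) t k.+1 m * numer_factor s t k.+1 m.+1.
Proof.
rewrite /numer (eq_bigr _ (fun (i : 'I_m.+1) _ => numer_factor_down s t k i)).
rewrite big_split /= prodr_const card_ord big_ord_recr /= -mulrA; congr (_ * (_ * _)).
by apply: eq_bigr => i _; rewrite numer_factor_right.
Qed.

(* The q-Pascal rule in terms of the numerator factors: it balances a first
   right step against a first down step. *)
Lemma numer_factor_pascal s t k m :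
  2 * rstep_w X Y q s t * (1 - (q ^+ 2) ^+ m.+1)
  + q ^+ m.+1 * numer_factor s t k.+1 m.+1 * (1 - (q ^+ 2) ^+ k.+1)
  = numer_factor s t k.+1 0 * (1 - (q ^+ 2) ^+ k.+2 * (q ^+ 2) ^+ m).
Proof.
set x := X * q ^ (s - 2 * t); set y := Y * q ^ (2 * t - 2 * k.+1%:Z - s).
set u := q ^+ m.+1; set v := q ^+ k.+1.
have -> : 2 * rstep_w X Y q s t = x + y * v ^+ 2.
  rewrite -numer_factor_rstep /numer_factor /x /y /v.
  rewrite -exprM exprnP -mulrA -expfzDr //.
  by congr (_ * q ^ _ + _ * q ^ _); lia.
have -> : numer_factor s t k.+1 m.+1 = x * u + y / u.
  rewrite /numer_factor /x /y /u exprnP -mulrA !expfzDr // invr_expz.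
  by rewrite !mulrA.
have -> : numer_factor s t k.+1 0 = x + y.
  by rewrite /numer_factor; congr (_ * q ^ _ + _ * q ^ _); lia.
have -> : (q ^+ 2) ^+ k.+2 * (q ^+ 2) ^+ m = (u * v) ^+ 2.
  by rewrite /u /v -exprD -exprM -exprD -exprM; congr (q ^+ _); lia.
by rewrite -q_pascal ?expf_neq0 // /u /v -!exprM (mulnC 2) (mulnC 2).
Qed.

(* Induction on m,
   then on k: a path either has no right step, or no down step, or it splits
   by its first step and the q-Pascal rule recombines the two parts. *)
Theorem paths_gf_closed m k s t :
  2 ^+ m * qpoch (q ^+ 2) (q ^+ 2) m * paths_gf X Y q (m + k) s t m
  = numer s t k m * qpoch ((q ^+ 2) ^+ k.+1) (q ^+ 2) m.
Proof.
elim: m k s t => [|m IHm] k s t.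
  by rewrite /numer /qpoch !big_ord0 paths_gf_down !mul1r.
elim: k s t => [|k IHk] s t.
  have IH_right := IHm 0%N (s + 1) t; rewrite addn0 expr1 in IH_right.
  rewrite addn0 paths_gf_cons (paths_gf_overfull X Y q _ _ (ltnSn m)) addr0.
  rewrite numer_right numer_factor_rstep !qpochSr exprS.
  transitivity (2 * rstep_w X Y q s t * (1 - q ^+ 2 * (q ^+ 2) ^+ m)
                * (2 ^+ m * qpoch (q ^+ 2) (q ^+ 2) m * paths_gf X Y q m (s + 1) t m)).
    by ring.
  by rewrite IH_right; ring.
have IH_right := IHm k.+1 (s + 1) t.
have IH_down := IHk s (t - 1); rewrite addSnnS in IH_down.
rewrite addSn paths_gf_cons mulrDr IH_down numer_down numer_right.
set Q := numer (s + 1) t k.+1 m; set N := qpoch ((q ^+ 2) ^+ k.+2) (q ^+ 2) m.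
have right_term : 2 ^+ m.+1 * qpoch (q ^+ 2) (q ^+ 2) m.+1
                  * (rstep_w X Y q s t * paths_gf X Y q (m + k.+1) (s + 1) t m)
                  = 2 * rstep_w X Y q s t * (1 - (q ^+ 2) ^+ m.+1) * (Q * N).
  by rewrite -IH_right qpochSr -exprS exprS; ring.
rewrite right_term qpochSl -exprSr -/N qpochSr -/N.
transitivity (Q * N * (2 * rstep_w X Y q s t * (1 - (q ^+ 2) ^+ m.+1)
              + q ^+ m.+1 * numer_factor s t k.+1 m.+1 * (1 - (q ^+ 2) ^+ k.+1))).
  by ring.
by rewrite numer_factor_pascal; ring.
Qed.

Corollary gf_closed (a b c d : int) : a <= c -> d <= b ->
  2 ^+ `|c - a| * qpoch (q ^+ 2) (q ^+ 2) `|c - a| * gf X Y q a b c d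
  = numer a b `|b - d| `|c - a| * qpoch ((q ^+ 2) ^+ `|b - d|.+1) (q ^+ 2) `|c - a|.
Proof. by move=> hac hbd; rewrite /gf hac hbd; apply: paths_gf_closed. Qed.
End ClosedForm.

Lemma qpoch_q2_neq0 (F : fieldType) (q : F) (M : nat) :
  (forall j : nat, (1 <= j <= M)%N -> 1 - q ^ (2 * j%:Z) != 0) ->
  qpoch (q ^+ 2) (q ^+ 2) M != 0.
Proof.
move=> hden; apply/prodf_neq0 => i _.
have := hden i.+1 (ltn_ord i); rewrite -exprS -exprM exprnP.
by congr (1 - q ^ _ != 0); lia.
Qed.

Theorem gf_product (F : fieldType) (X Y q : F) (a b c d : int)
  (h2 : (2 : F) != 0) (hq : q != 0)
  (hden : forall j : nat, (1 <= j <= `|c - a|)%N -> 1 - q ^ (2 * j%:Z) != 0)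
  (hac : a <= c) (hbd : d <= b) :
  gf X Y q a b c d =
    \prod_(1 <= j < `|c - a|.+1)
      ((X * q ^ (j%:Z - 1 - 2 * b + a) + Y * q ^ (- j%:Z + 1 + 2 * d - a))
        * (1 - q ^ (2 * (b - d) + 2 * j%:Z))
        / (2 * (1 - q ^ (2 * j%:Z)))).
Proof.
have := gf_closed X Y h2 hq hac hbd; have := qpoch_q2_neq0 hden.
set M := `|c - a|%N; set K := `|b - d|%N.
have hK : K%:Z = b - d by rewrite /K gez0_abs // subr_ge0.
rewrite /numer /qpoch big_add1 /= big_mkord => den_neq0 closed.
rewrite (eq_bigr (fun i : 'I_M => numer_factor X Y q a b K i
    * (1 - (q ^+ 2) ^+ K.+1 * (q ^+ 2) ^+ i) / (2 * (1 - q ^+ 2 * (q ^+ 2) ^+ i)))).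
  rewrite prodf_div big_split /= [in X in _ / X]big_split /= prodr_const card_ord.
  by rewrite -closed; field; rewrite den_neq0 expf_neq0.
move=> i _; congr (_ * _ / (2 * _)).
- by rewrite /numer_factor; congr (_ * q ^ _ + _ * q ^ _); lia.
- by rewrite -!exprM -exprD exprnP; congr (1 - q ^ _); lia.
- by rewrite -exprS -exprM exprnP; congr (1 - q ^ _); lia.
Qed.

Lemma prod_expz (F : fieldType) (q : F) (I : Type) (r : seq I) (P : pred I)
  (f : I -> int) : q != 0 ->
  \prod_(i <- r | P i) q ^ f i = q ^ (\sum_(i <- r | P i) f i).
Proof.
by move=> hq; rewrite (big_morph _ (fun x y => expfzDr x y hq) (expr0z q)).
Qed.

Lemma sum_arith (x : int) (M : nat) :
  2 * \sum_(i < M) (x - i%:Z) = M%:Z * (2 * x - M%:Z + 1).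
Proof.
elim: M => [|M IHM]; first by rewrite big_ord0 mulr0 mul0r.
rewrite big_ord_recr /= mulrDr IHM; lia.
Qed.

(* The total power of q pulled out of the numerator when X = Y = 1. *)
Lemma sum_exponent (a c d : int) (M : nat) : M%:Z = c - a ->
  \sum_(i < M) (2 * d - a - i%:Z) = (((a - c) * (a + c - 1 - 4 * d)) %/ 2)%Z.
Proof.
move=> hM; have := sum_arith (2 * d - a) M; rewrite hM => twice.
have -> : (a - c) * (a + c - 1 - 4 * d) = (\sum_(i < M) (2 * d - a - i%:Z)) * 2.
  by rewrite [RHS]mulrC twice; ring.
by rewrite mulzK.
Qed.

Lemma numer_factor_XY1 (F : fieldType) (q : F) (s t d : int) (k i : nat) :
  q != 0 -> k%:Z = t - d ->
  numer_factor 1 1 q s t k i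
  = q ^ (2 * d - s - i%:Z) * (1 - - q ^ (2 * s - 2 * t - 2 * d) * (q ^+ 2) ^+ i).
Proof.
move=> hq hk; rewrite /numer_factor !mul1r mulNr opprK mulrDr mulr1 addrC.
rewrite -exprM exprnP -!expfzDr //.
by congr (q ^ _ + q ^ _); lia.
Qed.

Lemma numer_XY1 (F : fieldType) (q : F) (s t d : int) (k m : nat) :
  q != 0 -> k%:Z = t - d ->
  numer 1 1 q s t k m
  = q ^ (\sum_(i < m) (2 * d - s - i%:Z))
    * qpoch (- q ^ (2 * s - 2 * t - 2 * d)) (q ^+ 2) m.
Proof.
move=> hq hk.
rewrite /numer (eq_bigr _ (fun (i : 'I_m) _ => numer_factor_XY1 s i hq hk)).
by rewrite big_split /= prod_expz.
Qed.

Theorem gf_XY1 (F : fieldType) (q : F) (a b c d : int)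
  (h2 : (2 : F) != 0) (hq : q != 0)
  (hden : forall j : nat, (1 <= j <= `|c - a|)%N -> 1 - q ^ (2 * j%:Z) != 0)
  (hac : a <= c) (hbd : d <= b) :
  gf 1 1 q a b c d =
    (2 : F) ^ (a - c) * q ^ (((a - c) * (a + c - 1 - 4 * d)) %/ 2)%Z
    * qpoch (- q ^ (2 * a - 2 * b - 2 * d)) (q ^+ 2) `|c - a|
    * qpoch (q ^ (2 * b - 2 * d + 2)) (q ^+ 2) `|c - a|
    / qpoch (q ^+ 2) (q ^+ 2) `|c - a|.
Proof.
have := gf_closed 1 1 h2 hq hac hbd; have := qpoch_q2_neq0 hden.
set M := `|c - a|%N; set K := `|b - d|%N.
have hM : M%:Z = c - a by rewrite /M gez0_abs // subr_ge0.
have hK : K%:Z = b - d by rewrite /K gez0_abs // subr_ge0.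
have -> : (q ^+ 2) ^+ K.+1 = q ^ (2 * b - 2 * d + 2).
  by rewrite -exprM exprnP; congr (q ^ _); lia.
have -> : (2 : F) ^ (a - c) = (2 ^+ M)^-1.
  by rewrite exprnN; congr (_ ^ _); lia.
rewrite (numer_XY1 a M hq hK) (sum_exponent d hM) => den_neq0 closed.
apply: (mulfI (mulf_neq0 (expf_neq0 M h2) den_neq0)); rewrite closed.
by field; rewrite den_neq0 expf_neq0.
Qed.

Theorem mainTheorem7 (F : fieldType) (X Y q : F) (a b c d : int)
  (h2 : (2 : F) != 0) (hq : q != 0)
  (hden : forall j : nat, (1 <= j <= `|c - a|)%N -> 1 - q ^ (2 * j%:Z) != 0)
  (hac : a <= c) (hbd : d <= b) :
  gf X Y q a b c d =
    \prod_(1 <= j < `|c - a|.+1)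
      ((X * q ^ (j%:Z - 1 - 2 * b + a) + Y * q ^ (- j%:Z + 1 + 2 * d - a))
        * (1 - q ^ (2 * (b - d) + 2 * j%:Z))
        / (2 * (1 - q ^ (2 * j%:Z))))
  /\
  gf 1 1 q a b c d =
    (2 : F) ^ (a - c) * q ^ (((a - c) * (a + c - 1 - 4 * d)) %/ 2)%Z
    * qpoch (- q ^ (2 * a - 2 * b - 2 * d)) (q ^+ 2) `|c - a|
    * qpoch (q ^ (2 * b - 2 * d + 2)) (q ^+ 2) `|c - a|
    / qpoch (q ^+ 2) (q ^+ 2) `|c - a|.
Proof. by split; [apply: gf_product | apply: gf_XY1]. Qed.
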